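(* Let $l\ge1$ and work in $\mathfrak{OA}_{1,2l}=\mathfrak{OA}/\mathfrak I_{(t-1)^{2l}}$, writing $X_k,Y_k$ for the images. The operator $\mathrm{ad}\,X_0$ on $\mathfrak{OA}_{1,2l}$ is diagonalizable with eigenvalues $0,4,-4$, each eigenspace being $l$-dimensional, with bases: eigenvalue $0$: $X_0$ and $\sum_{k=2j-2}^{2l-1}(-1)^k\binom{k-1}{2j-4}X_k$ for $2\le j\le l$; eigenvalue $\pm4$: $2Y_{2j-1}\pm\Big(X_{2j-1}-\sum_{k=2j-1}^{2l-1}(-1)^k\binom{k-1}{2j-2}X_k\Big)$ for $1\le j\le l$. Moreover the $0$-eigenvectors commute with each other.
   Context: Work over $\mathbb C$. $\mathfrak{sl}_2$ has basis $e,f,h$ with $[e,f]=h$, $[h,e]=2e$, $[h,f]=-2f$. The Onsager algebra is the Lie subalgebra $\mathfrak{OA}=\{p(t)e+p(t^{-1})f+q(t)h:\ p,q\in\mathbb C[t,t^{-1}],\ q(t^{-1})=-q(t)\}$ of the loop algebra $\mathbb C[t,t^{-1}]\otimes\mathfrak{sl}_2$ (bracket $[px,qy]=pq[x,y]$). $\mathfrak I_{(t-1)^L}=\{p(t)e+p(t^{-1})f+q(t)h\in\mathfrak{OA}: p,q\in(t-1)^L\mathbb C[t,t^{-1}]\}$. For $k\ge0$, $X_k=2(t-1)^ke+2(t^{-1}-1)^kf$ and $Y_k=(-1)^k\big((t-1)^k-(t^{-1}-1)^k\big)h$, elements of $\mathfrak{OA}$. $\binom xa=x(x-1)\cdots(x-a+1)/a!$,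 $\binom x0=1$. *)

From HB Require Import structures.
From mathcomp Require Import all_boot all_order all_algebra.
Set Implicit Arguments. Unset Strict Implicit. Unset Printing Implicit Defensive.
Import Order.TTheory GRing.Theory Num.Theory.
Local Open Scope ring_scope.

(* Laurent polynomials C[t,t^-1] are realised inside the field of rational
   functions RF C = {fraction {poly C}}, with t = 'X%:F. *)

Definition RF (C : numClosedFieldType) := {fraction {poly C}}.

Local Notation "x %:F" := (@FracField.tofrac _ x).

Definition tt (C : numClosedFieldType) : RF C := ('X)%:F.

Definition cst (C : numClosedFieldType) (c : C) : RF C := (c%:P)%:F.

(* x is a Laurent polynomial divisible by (t-1)^L in C[t,t^-1]
   (L = 0: x is any Laurent polynomial) *)
Definition in_tm1_ideal (C : numClosedFieldType) (L : nat) (x : RF C) : Prop :=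
  exists (n : nat) (p : {poly C}), x = (('X - 1) ^+ L * p)%:F / tt C ^+ n.

Definition is_laurent (C : numClosedFieldType) (x : RF C) : Prop :=
  in_tm1_ideal 0 x.

(* laurent_inv x y  <->  x = x(t) is a Laurent polynomial and y = x(t^-1). *)
Definition laurent_inv (C : numClosedFieldType) (x y : RF C) : Prop :=
  exists (n : nat) (p : {poly C}),
    x = p%:F / tt C ^+ n /\
    y = (map_poly (@cst C) p).[(tt C)^-1] * tt C ^+ n.

(* Elements a e + b f + c h of the loop algebra, as triples ((a, b), c). *)
Definition loop (C : numClosedFieldType) := (RF C * RF C * RF C)%type.

Definition ce (C : numClosedFieldType) (v : loop C) : RF C := v.1.1.
Definition cf (C : numClosedFieldType) (v : loop C) : RF C := v.1.2.
Definition ch (C : numClosedFieldType) (v : loop C) : RF C := v.2.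

Definition lscale (C : numClosedFieldType) (c : C) (v : loop C) : loop C :=
  ((cst c * ce v, cst c * cf v), cst c * ch v).

(* Lie bracket of sl2 (x) C[t,t^-1]:  [e,f]=h, [h,e]=2e, [h,f]=-2f *)
Definition lbr (C : numClosedFieldType) (u v : loop C) : loop C :=
  ((2%:R * (ch u * ce v - ce u * ch v),
    2%:R * (cf u * ch v - ch u * cf v)),
    ce u * cf v - cf u * ce v).

(* membership in the Onsager algebra:
   p(t) e + p(t^-1) f + q(t) h with q(t^-1) = - q(t) *)
Definition inOA (C : numClosedFieldType) (v : loop C) : Prop :=
  laurent_inv (ce v) (cf v) /\ laurent_inv (ch v) (- ch v).

Definition inI (C : numClosedFieldType) (L : nat) (v : loop C) : Prop :=
  inOA v /\ in_tm1_ideal L (ce v) /\ in_tm1_ideal L (ch v).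

Definition Xk (C : numClosedFieldType) (k : nat) : loop C :=
  ((2%:R * (tt C - 1) ^+ k, 2%:R * ((tt C)^-1 - 1) ^+ k), 0).

Definition Yk (C : numClosedFieldType) (k : nat) : loop C :=
  ((0, 0), (-1) ^+ k * ((tt C - 1) ^+ k - ((tt C)^-1 - 1) ^+ k)).

Definition adX0 (C : numClosedFieldType) (v : loop C) : loop C := lbr (Xk C 0) v.

(* v is a lam-eigenvector of ad X_0 in OA / I_{(t-1)^L} (v taken in OA;
   "modulo I", nonzero-ness not required here) *)
Definition eig_mod (C : numClosedFieldType) (L : nat) (lam : C) (v : loop C) : Prop :=
  inOA v /\ inI L (adX0 v - lscale lam v).

Definition eigenbasis_mod (C : numClosedFieldType) (L : nat) (lam : C) (m : nat)
  (B : 'I_m -> loop C) : Prop :=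
  [/\ (forall i, eig_mod L lam (B i)),
      (forall c : 'I_m -> C, inI L (\sum_(i < m) lscale (c i) (B i)) ->
         forall i, c i = 0)
    & (forall w, eig_mod L lam w ->
         exists c : 'I_m -> C, inI L (w - \sum_(i < m) lscale (c i) (B i)))].

Definition B0 (C : numClosedFieldType) (l : nat) (i : 'I_l) : loop C :=
  let j := i.+1 in
  if j == 1%N then Xk C 0 else
  \sum_(2 * j - 2 <= k < 2 * l)
     lscale ((-1) ^+ k * ('C(k - 1, 2 * j - 4))%:R) (Xk C k).

Definition Bpm (C : numClosedFieldType) (l : nat) (s : C) (i : 'I_l) : loop C :=
  let j := i.+1 in
  lscale 2%:R (Yk C (2 * j - 1)) +
  lscale s (Xk C (2 * j - 1) -
            \sum_(2 * j - 1 <= k < 2 * l)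
               lscale ((-1) ^+ k * ('C(k - 1, 2 * j - 2))%:R) (Xk C k)).

Arguments B0 C l i : clear implicits.
Arguments Bpm C l s i : clear implicits.

From HB Require Import structures.
From mathcomp Require Import all_boot all_order all_algebra.
From mathcomp.algebra_tactics Require Import ring.
From mathcomp Require Import zify.
Set Implicit Arguments. Unset Strict Implicit. Unset Printing Implicit Defensive.
Import Order.TTheory GRing.Theory Num.Theory.
Local Open Scope ring_scope.

(* Write u = t - 1 and x^ = x(t^-1) for the reflection of Laurent polynomials, so
   that an element of OA is a e + a^ f + c h with c^ = -c.  Since
   ad X_0 (a e + a^ f + c h) = -4c e + 4c f + 2(a^ - a) h, modulo (t-1)^2l the
   0-eigenvectors are those with c = 0 and a^ = a, an element of a (+-4)-eigenspace
   is determined by its h-coefficient c, and the decomposition into eigenvectors is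
   explicit.

   As u^ = -u/(1+u), the reflection multiplies the leading term of a u^d by (-1)^d.
   Hence a truncation x with x^ = +-x modulo u^2l has its leading term in even
   (resp. odd) degree, and any l such truncations with leading terms in degrees 2i
   (resp. 2i+1), i < l, form a basis: peel off leading terms one degree at a time.
   The given vectors are of this kind because the binomial series of
   (-u/(1+u))^(m+1) is the sum over k of (-1)^k C(k-1, m) u^k. *)

Section BinomialSeries.
Variable R : comPzRingType.
Implicit Type w : R.

(* The binomial series of (-w/(1+w))^(m+1), truncated after the term in w^n. *)
Definition binom_series w (m n : nat) : R :=
  \sum_(0 <= k < n) (-1) ^+ k.+1 * 'C(k, m)%:R * w ^+ k.+1.

Lemma binom_seriesSn w m n :
  binom_series w m n.+1 = binom_series w m n + (-1) ^+ n.+1 * 'C(n, m)%:R * w ^+ n.+1.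
Proof. by rewrite /binom_series big_nat_recr. Qed.

Lemma binom_series_rec w m n :
  (1 + w) * binom_series w m.+1 n + w * binom_series w m n =
  - ((-1) ^+ n.+1 * 'C(n, m.+1)%:R * w ^+ n.+1).
Proof.
have hS : binom_series w m.+1 n.+1 = - (w * binom_series w m.+1 n + w * binom_series w m n).
  rewrite /binom_series big_nat_recl // bin0n mulr0 mul0r add0r.
  rewrite !mulr_sumr -big_split /= -sumrN; apply: eq_bigr => k _.
  rewrite binS natrD !exprS; ring.
have := binom_seriesSn w m.+1 n; rewrite hS => e.
set T1 := binom_series w m.+1 n in e *; set T0 := binom_series w m n in e *.
have -> : (-1) ^+ n.+1 * 'C(n, m.+1)%:R * w ^+ n.+1 = - (w * T1 + w * T0) - T1.
  by rewrite e; ring.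
ring.
Qed.

Lemma binom_series_rec0 w n :
  (1 + w) * binom_series w 0 n + w = - ((-1) ^+ n.+1 * w ^+ n.+1).
Proof.
have hS : binom_series w 0 n.+1 = - w - w * binom_series w 0 n.
  rewrite /binom_series big_nat_recl // bin0 expr1 mulr1 mulN1r.
  rewrite mulr_sumr -sumrN; congr (_ + _); apply: eq_bigr => k _.
  rewrite !bin0 !exprS; ring.
have := binom_seriesSn w 0 n; rewrite hS bin0 mulr1 => e.
set T0 := binom_series w 0 n in e *.
have -> : (-1) ^+ n.+1 * w ^+ n.+1 = - w - w * T0 - T0 by rewrite e; ring.
ring.
Qed.

Lemma binom_series_shift w m n : (m < n)%N ->
  \sum_(m.+1 <= k < n) (-1) ^+ k * 'C(k - 1, m)%:R * w ^+ k = binom_series w m n.-1.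
Proof.
move=> hmn.
have h0 : \sum_(1 <= k < m.+1) (-1) ^+ k * 'C(k - 1, m)%:R * w ^+ k = 0.
  rewrite big_nat big1 // => k /andP [hk1 hk2].
  by rewrite bin_small ?mulr0 ?mul0r //; lia.
transitivity (\sum_(1 <= k < n) (-1) ^+ k * 'C(k - 1, m)%:R * w ^+ k).
  by rewrite [RHS](big_cat_nat _ (n := m.+1)) //= h0 add0r.
by rewrite big_add1 /binom_series; apply: eq_bigr => k _; rewrite subSS subn0.
Qed.

Lemma sign_odd_double k : (-1) ^+ (2 * k).+1 = -1 :> R.
Proof. by rewrite exprS -signr_odd oddM /= expr0 mulr1. Qed.

End BinomialSeries.

Section OnsagerQuotient.
Variable C : numClosedFieldType.
Local Notation RF := (RF C).
Local Notation F := (@FracField.tofrac {poly C}).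
Local Notation t := (tt C).
Local Notation I := (@in_tm1_ideal C).

HB.instance Definition _ := GRing.RMorphism.copy (@cst C) (F \o polyC).

Lemma cst_neq0 (c : C) : (cst c != 0 :> RF) = (c != 0).
Proof. by rewrite /cst tofrac_eq0 polyC_eq0. Qed.

Lemma tt_neq0 : t != 0.
Proof. by rewrite /tt tofrac_eq0 polyX_eq0. Qed.

Lemma ttX_neq0 n : t ^+ n != 0.
Proof. by rewrite expf_neq0 // tt_neq0. Qed.

Definition u : RF := t - 1.
Definition ub : RF := t^-1 - 1.

Lemma ubE : ub = - (u / t).
Proof. by rewrite /ub /u mulrBl mulfV ?tt_neq0 // mul1r opprB. Qed.

Lemma ideal0 d : I d 0.
Proof. by exists 0%N, 0; rewrite mulr0 tofrac0 mul0r. Qed.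

Lemma idealD d x y : I d x -> I d y -> I d (x + y).
Proof.
move=> [n [p ->]] [m [q ->]]; exists (n + m)%N, (p * 'X^m + q * 'X^n).
rewrite mulrDr !mulrA !tofracD !tofracM !tofracXn /= -/t exprD.
by rewrite addf_div ?ttX_neq0.
Qed.

Lemma idealM d e x y : I d x -> I e y -> I (d + e) (x * y).
Proof.
move=> [n [p ->]] [m [q ->]]; exists (n + m)%N, (p * q).
rewrite mulf_div exprD !tofracM !tofracXn /= -/t exprD.
by rewrite !mulrA (mulrAC _ (F p)).
Qed.

Lemma ideal_leq d e x : (e <= d)%N -> I d x -> I e x.
Proof.
move=> hed [n [p ->]]; exists n, (('X - 1) ^+ (d - e) * p).
by rewrite mulrA -exprD subnKC.
Qed.

Lemma idealMr d (x y : RF) : I d x -> is_laurent y -> I d (x * y).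
Proof. by move=> hx hy; rewrite -[d]addn0; apply: idealM. Qed.

Lemma idealMl d (x y : RF) : is_laurent x -> I d y -> I d (x * y).
Proof. by move=> hx hy; rewrite mulrC; apply: idealMr. Qed.

Lemma laurent_cst (c : C) : is_laurent (cst c).
Proof. by exists 0%N, c%:P; rewrite !expr0 mul1r divr1. Qed.

Lemma laurent1 : is_laurent (1 : RF).
Proof. by rewrite -(rmorph1 (@cst C)); apply: laurent_cst. Qed.

Lemma laurent_t : is_laurent t.
Proof. by exists 0%N, 'X; rewrite !expr0 mul1r divr1. Qed.

Lemma laurent_tV : is_laurent t^-1.
Proof. by exists 1%N, 1; rewrite expr0 mul1r tofrac1 expr1 div1r. Qed.

Lemma laurentX (x : RF) n : is_laurent x -> is_laurent (x ^+ n).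
Proof.
move=> hx; elim: n => [|n ih]; first by rewrite expr0; apply: laurent1.
by rewrite exprS; apply: idealMl.
Qed.

Lemma idealZ d (c : C) (x : RF) : I d x -> I d (cst c * x).
Proof. exact: idealMl (laurent_cst c). Qed.

Lemma idealN d x : I d x -> I d (- x).
Proof. by move=> h; rewrite -mulN1r -(rmorphN1 (@cst C)); apply: idealZ. Qed.

Lemma idealB d x y : I d x -> I d y -> I d (x - y).
Proof. by move=> hx hy; apply: idealD hx (idealN hy). Qed.

Lemma idealMn d n x : I d x -> I d (n%:R * x).
Proof. by move=> h; rewrite -(rmorph_nat (@cst C)); apply: idealZ. Qed.

Lemma idealZ_inv d (c : C) (x : RF) : c != 0 -> I d (cst c * x) -> I d x.
Proof.
by move=> hc /(idealZ c^-1); rewrite mulrA -rmorphM mulVf // rmorph1 mul1r.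
Qed.

Lemma ideal_eq d x y : I d x -> x = y -> I d y.
Proof. by move=> h <-. Qed.

Lemma ideal_sum d (J : Type) (r : seq J) (P : pred J) (G : J -> RF) :
  (forall i, P i -> I d (G i)) -> I d (\sum_(i <- r | P i) G i).
Proof.
move=> h; elim/big_rec: _ => [|i x Pi hx]; first exact: ideal0.
exact: idealD (h i Pi) hx.
Qed.

Lemma idealX1 k x : I 1 x -> I k (x ^+ k).
Proof.
move=> hx; elim: k => [|k ih]; first by rewrite expr0; apply: laurent1.
by rewrite exprS -add1n; apply: idealM.
Qed.

Lemma ideal_uX d : I d (u ^+ d).
Proof.
apply: idealX1; exists 0%N, 1.
by rewrite expr1 mulr1 tofracB tofrac1 expr0 divr1.
Qed.

Lemma ideal_ubX d : I d (ub ^+ d).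
Proof.
apply: idealX1; rewrite ubE; apply/idealN/idealMr/laurent_tV.
by rewrite -[u]expr1; apply: ideal_uX.
Qed.

Definition lead_term (d : nat) (a : C) (x : RF) : Prop :=
  I d.+1 (x - cst a * u ^+ d).

Lemma lead_term_exists d x : I d x -> exists a, lead_term d a x.
Proof.
move=> [n [p ->]]; exists p.[1].
have : root (p - p.[1] *: 'X^n) 1.
  by rewrite /root hornerD hornerN hornerZ hornerXn expr1n mulr1 subrr.
move=> /factor_theorem [q hq]; exists n, q.
have hq' : ('X - 1) * q = p - p.[1] *: 'X^n by rewrite hq polyC1 mulrC.
rewrite [in RHS]exprSr -mulrA hq' mulrBr tofracB mulrBl; congr (_ - _).
rewrite -mul_polyC mulrCA !tofracM !tofracXn tofracB tofrac1 -/t mulrA mulfK //.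
exact: ttX_neq0.
Qed.

Lemma ideal_cst_uX_eq0 d a : I d.+1 (cst a * u ^+ d) -> a = 0.
Proof.
move=> [n [p h]].
have /eqP : F (a%:P * ('X - 1) ^+ d * 'X^n) = F (('X - 1) ^+ d.+1 * p).
  rewrite !tofracM !tofracXn tofracB tofrac1 -/t -/u -[F a%:P]/(cst a) h.
  by rewrite divfK ?ttX_neq0 // tofracM tofracXn tofracB tofrac1.
rewrite tofrac_eq => /eqP.
have hX : ('X - 1) ^+ d != 0 :> {poly C} by rewrite expf_neq0 // -polyC1 polyXsubC_eq0.
rewrite exprS (mulrC _ (('X - 1) ^+ d)) -mulrA mulrCA -mulrA.
move=> /(mulfI hX) /(congr1 (fun q => q.[1])).
by rewrite !hornerM hornerXn expr1n mulr1 hornerC hornerD hornerN hornerX hornerC subrr mul0r.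
Qed.

Lemma lead_term0 d x : lead_term d 0 x <-> I d.+1 x.
Proof. by rewrite /lead_term rmorph0 mul0r subr0. Qed.

Lemma lead_termD d a b x y :
  lead_term d a x -> lead_term d b y -> lead_term d (a + b) (x + y).
Proof.
move=> hx hy; rewrite /lead_term rmorphD /=.
have -> : x + y - (cst a + cst b) * u ^+ d = (x - cst a * u ^+ d) + (y - cst b * u ^+ d) by ring.
exact: idealD.
Qed.

Lemma lead_termZ d c a x : lead_term d a x -> lead_term d (c * a) (cst c * x).
Proof.
move=> hx; rewrite /lead_term rmorphM /= -mulrA -mulrBr; exact: idealZ.
Qed.

Lemma lead_termB d a b x y :
  lead_term d a x -> lead_term d b y -> lead_term d (a - b) (x - y).
Proof.
move=> hx hy; have := lead_termD hx (lead_termZ (-1) hy).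
by rewrite rmorphN1 !mulN1r.
Qed.

Lemma lead_term_ideal d a x : lead_term d a x -> I d x.
Proof.
move=> hx; rewrite -(subrK (cst a * u ^+ d) x).
exact: idealD (ideal_leq (leqnSn d) hx) (idealZ a (ideal_uX d)).
Qed.

Lemma lead_term_uniq d a b x : lead_term d a x -> lead_term d b x -> a = b.
Proof.
move=> ha hb; apply/eqP; rewrite -subr_eq0; apply/eqP/(@ideal_cst_uX_eq0 d).
by move: (lead_termB ha hb); rewrite /lead_term subrr sub0r => /idealN; rewrite opprK.
Qed.

Lemma lead_term_uX d : lead_term d 1 (u ^+ d).
Proof. by rewrite /lead_term rmorph1 mul1r subrr; apply: ideal0. Qed.

Lemma lead_term_ubX d : lead_term d ((-1) ^+ d) (ub ^+ d).
Proof.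
rewrite /lead_term rmorph_sign.
have -> : ub ^+ d - (-1) ^+ d * u ^+ d = (u ^+ d * ub) * ((-1) ^+ d * \sum_(i < d) t^-1 ^+ i).
  have hub : ub ^+ d = (-1) ^+ d * u ^+ d * (t^-1 ^+ d).
    by rewrite ubE [LHS]exprNn exprMn mulrA.
  have hsum : t^-1 ^+ d - 1 = ub * \sum_(i < d) t^-1 ^+ i by rewrite subrX1.
  transitivity ((-1) ^+ d * u ^+ d * (t^-1 ^+ d - 1)); first by rewrite hub; ring.
  by rewrite hsum; ring.
rewrite -[d.+1]addn1; apply: idealMr; first by apply: idealM (ideal_uX d) _; rewrite -[ub]expr1; apply: ideal_ubX.
apply/idealMl; first by apply/laurentX/idealN/laurent1.
by apply: ideal_sum => i _; apply/laurentX/laurent_tV.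
Qed.

Local Notation LI := (@laurent_inv C).

Definition polyV (p : {poly C}) : RF := (map_poly (@cst C) p).[t^-1].

HB.instance Definition _ :=
  GRing.RMorphism.copy polyV (horner_eval t^-1 \o map_poly (@cst C)).

Lemma polyVX : polyV 'X = t^-1.
Proof. by rewrite /polyV map_polyX hornerX. Qed.

Lemma polyVC c : polyV c%:P = cst c.
Proof. by rewrite /polyV map_polyC hornerC. Qed.

Lemma laurent_invE x y :
  LI x y <-> exists n p, x = F p / t ^+ n /\ y = polyV p * t ^+ n.
Proof. by []. Qed.

Lemma laurent_inv_fun x y y' : LI x y -> LI x y' -> y = y'.
Proof.
move=> /laurent_invE [n [p [-> ->]]] /laurent_invE [m [q [/eqP e ->]]].
move: e; rewrite eqr_div ?ttX_neq0 // -!tofracXn -!tofracM tofrac_eq.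
move=> /eqP/(congr1 polyV)/eqP; rewrite !rmorphM !rmorphXn /= polyVX !exprVn.
by rewrite eqr_div ?ttX_neq0 // => /eqP.
Qed.

Lemma laurent_invD x y x' y' : LI x y -> LI x' y' -> LI (x + x') (y + y').
Proof.
move=> /laurent_invE [n [p [-> ->]]] /laurent_invE [m [q [-> ->]]].
apply/laurent_invE; exists (n + m)%N, (p * 'X^m + q * 'X^n); split.
  by rewrite addf_div ?ttX_neq0 // tofracD !tofracM !tofracXn -exprD.
rewrite rmorphD !rmorphM !rmorphXn /= polyVX exprD !exprVn.
move: (ttX_neq0 n) (ttX_neq0 m) (polyV p) (polyV q); move: (t ^+ n) (t ^+ m) => a b ha hb P Q.
rewrite mulrDl; congr (_ + _); first by rewrite (mulrC a) mulrA (mulfVK hb).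
by rewrite mulrA (mulfVK ha).
Qed.

Lemma laurent_invM x y x' y' : LI x y -> LI x' y' -> LI (x * x') (y * y').
Proof.
move=> /laurent_invE [n [p [-> ->]]] /laurent_invE [m [q [-> ->]]].
apply/laurent_invE; exists (n + m)%N, (p * q); split.
  by rewrite mulf_div tofracM exprD.
by rewrite rmorphM exprD !mulrA (mulrAC _ (t ^+ n)).
Qed.

Lemma laurent_inv_poly p : LI (F p) (polyV p).
Proof. by apply/laurent_invE; exists 0%N, p; rewrite !expr0 divr1 mulr1. Qed.

Lemma laurent_inv_cst c : LI (cst c) (cst c).
Proof. by rewrite -[in X in LI _ X]polyVC; apply: laurent_inv_poly. Qed.

Lemma laurent_inv_t : LI t t^-1.
Proof. by rewrite -polyVX; apply: laurent_inv_poly. Qed.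

Lemma laurent_inv_tV : LI t^-1 t.
Proof.
by apply/laurent_invE; exists 1%N, 1; rewrite !rmorph1 !expr1 div1r mul1r.
Qed.

Lemma laurent_inv1 : LI 1 1.
Proof. by rewrite -(rmorph1 (@cst C)); apply: laurent_inv_cst. Qed.

Lemma laurent_inv0 : LI 0 0.
Proof. by rewrite -(rmorph0 (@cst C)); apply: laurent_inv_cst. Qed.

Lemma laurent_invZ c x y : LI x y -> LI (cst c * x) (cst c * y).
Proof. exact: laurent_invM (laurent_inv_cst c). Qed.

Lemma laurent_invN x y : LI x y -> LI (- x) (- y).
Proof.
by move=> h; rewrite -(mulN1r x) -(mulN1r y) -(rmorphN1 (@cst C)); apply: laurent_invZ.
Qed.

Lemma laurent_invB x y x' y' : LI x y -> LI x' y' -> LI (x - x') (y - y').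
Proof. by move=> h h'; apply: laurent_invD h (laurent_invN h'). Qed.

Lemma laurent_invMn n x y : LI x y -> LI (n%:R * x) (n%:R * y).
Proof. by move=> h; rewrite -(rmorph_nat (@cst C)); apply: laurent_invZ. Qed.

Lemma laurent_invX n x y : LI x y -> LI (x ^+ n) (y ^+ n).
Proof.
move=> h; elim: n => [|n ih]; first by rewrite !expr0; apply: laurent_inv1.
by rewrite !exprS; apply: laurent_invM.
Qed.

Lemma laurent_inv_u : LI u ub.
Proof. exact: laurent_invB laurent_inv_t laurent_inv1. Qed.

Lemma laurent_inv_ub : LI ub u.
Proof. exact: laurent_invB laurent_inv_tV laurent_inv1. Qed.

Lemma laurent_inv_polyV p : LI (polyV p) (F p).
Proof.
elim/poly_ind: p => [|p c ih]; first by rewrite rmorph0 tofrac0; apply: laurent_inv0.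
rewrite rmorphD rmorphM /= polyVX polyVC tofracD tofracM.
exact: laurent_invD (laurent_invM ih laurent_inv_tV) (laurent_inv_cst c).
Qed.

Lemma laurent_inv_sym x y : LI x y -> LI y x.
Proof.
move=> /laurent_invE [n [p [-> ->]]]; apply: laurent_invM (laurent_inv_polyV p) _.
by rewrite -exprVn; apply: laurent_invX laurent_inv_t.
Qed.

Lemma laurent_inv_laurent x y : LI x y -> is_laurent x.
Proof. by move=> /laurent_invE [n [p [-> _]]]; exists n, p; rewrite expr0 mul1r. Qed.

Lemma laurent_inv_ideal d x y : LI x y -> I d x -> I d y.
Proof.
move=> hxy [n [p hx]].
have hxy' : LI x (polyV (('X - 1) ^+ d * p) * t ^+ n).
  by apply/laurent_invE; exists n, (('X - 1) ^+ d * p).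
rewrite (laurent_inv_fun hxy hxy') rmorphM rmorphXn rmorphB /= polyVX rmorph1 -/ub -mulrA.
apply: idealMr (ideal_ubX d) _; apply: idealMr (laurentX _ laurent_t).
exact: laurent_inv_laurent (laurent_inv_sym (laurent_inv_poly p)).
Qed.

Lemma lead_term_laurent_inv d a x y :
  LI x y -> lead_term d a x -> lead_term d ((-1) ^+ d * a) y.
Proof.
move=> hxy hx.
have hy : lead_term d 0 (y - cst a * ub ^+ d).
  apply/lead_term0/(laurent_inv_ideal _ hx).
  exact: laurent_invB hxy (laurent_invZ a (laurent_invX d laurent_inv_u)).
have := lead_termD hy (lead_termZ a (lead_term_ubX d)).
by rewrite subrK add0r mulrC.
Qed.

Definition sym_mod (L : nat) (par : bool) (x : RF) : Prop :=
  exists2 y, LI x y & I L (y - (-1) ^+ par * x).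

Lemma sym_mod_laurent L par x : sym_mod L par x -> is_laurent x.
Proof. by move=> [y hxy _]; apply: laurent_inv_laurent hxy. Qed.

Lemma sym_modB L par x x' :
  sym_mod L par x -> sym_mod L par x' -> sym_mod L par (x - x').
Proof.
move=> [y hxy hy] [y' hxy' hy']; exists (y - y'); first exact: laurent_invB.
have -> : y - y' - (-1) ^+ par * (x - x') =
  (y - (-1) ^+ par * x) - (y' - (-1) ^+ par * x') by ring.
exact: idealB.
Qed.

Lemma sym_modZ L par c x : sym_mod L par x -> sym_mod L par (cst c * x).
Proof.
move=> [y hxy hy]; exists (cst c * y); first exact: laurent_invZ.
by rewrite mulrCA -mulrBr; apply: idealZ.
Qed.

(* Reflection turns the leading term a u^d of x into (-1)^d a u^d, symmetry into
   (-1)^par a u^d. *)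
Lemma sym_mod_lead_term L par d a x :
  sym_mod L par x -> (d < L)%N -> odd d != par -> lead_term d a x -> a = 0.
Proof.
move=> [y hxy hy] hdL hpar hx.
have hs : (-1) ^+ d = - (-1) ^+ par :> C.
  move: hpar {hy}; rewrite -signr_odd; case: (odd d); case: par => //= _.
  by rewrite ?expr0 ?expr1 ?opprK.
have hsx := lead_termZ ((-1) ^+ par) hx; rewrite rmorph_sign in hsx.
have := lead_termD hsx ((lead_term0 _ _).2 (ideal_leq hdL hy)).
rewrite addr0 addrC subrK => hy'.
have e := lead_term_uniq (lead_term_laurent_inv hxy hx) hy'.
have : 2%:R * ((-1) ^+ par * a) = 0.
  by rewrite mulr_natl mulr2n {1}(esym e) hs mulNr addNr.
by move/eqP; rewrite !mulf_eq0 pnatr_eq0 signr_eq0 /= => /eqP.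
Qed.

Section TruncationBasis.
Variables (l : nat) (par : bool) (e : 'I_l -> RF).
Hypothesis e_lead :
  forall i : 'I_l, exists2 a, a != 0 & lead_term (2 * i + par) a (e i).

Lemma truncation_free (c : 'I_l -> C) :
  I (2 * l) (\sum_(j < l) cst (c j) * e j) -> forall j, c j = 0.
Proof.
move=> hs; suff h n (j : 'I_l) : (j < n)%N -> c j = 0 by move=> j; apply: (h j.+1).
elim: n j => [//|n IH] j hj; case: (ltnP j n) => [|hnj]; first exact: IH.
have [a ha hlead] := e_lead j.
have hsum : lead_term (2 * j + par) (c j * a) (\sum_(j' < l) cst (c j') * e j').
  rewrite (bigD1 j) //= -[c j * a]addr0; apply: lead_termD (lead_termZ _ hlead) _.
  apply/lead_term0/ideal_sum => j'; rewrite -val_eqE /= => hj'.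
  case: (ltnP j' j) => hjj'.
    by rewrite IH ?rmorph0 ?mul0r; [apply: ideal0 | lia].
  have [a' _ /lead_term_ideal hj'e] := e_lead j'.
  by apply/idealZ/(ideal_leq _ hj'e); lia.
have hpar : (par <= 1)%N by case: par.
have hs' : lead_term (2 * j + par) 0 (\sum_(j' < l) cst (c j') * e j').
  by apply/lead_term0/(ideal_leq _ hs); have := ltn_ord j; lia.
move/eqP: (lead_term_uniq hsum hs'); rewrite mulf_eq0 (negPf ha) orbF.
by move/eqP.
Qed.

Hypothesis e_sym : forall i : 'I_l, sym_mod (2 * l) par (e i).

Lemma truncation_span x : sym_mod (2 * l) par x ->
  exists c : 'I_l -> C, I (2 * l) (x - \sum_(j < l) cst (c j) * e j).
Proof.
suff h k y : sym_mod (2 * l) par y -> I (2 * l - k) y ->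
    exists c : 'I_l -> C, I (2 * l) (y - \sum_(j < l) cst (c j) * e j).
  by move=> hx; apply: (h (2 * l)) => //; rewrite subnn; apply: sym_mod_laurent hx.
elim: k y => [|k IH] y hy hyk.
  rewrite subn0 in hyk; exists (fun=> 0); rewrite big1 ?subr0 // => j _.
  by rewrite rmorph0 mul0r.
case: (leqP (2 * l) k) => hk.
  by apply: IH hy _; rewrite (_ : 2 * l - k = 2 * l - k.+1)%N //; lia.
set d := (2 * l - k.+1)%N; rewrite (_ : 2 * l - k = d.+1)%N in IH; last by lia.
have [a ha] := lead_term_exists hyk.
have [hpar|hpar] := boolP (odd d == par); last first.
  apply: (IH _ hy); apply/lead_term0.
  by rewrite -(sym_mod_lead_term hy _ hpar ha) //; lia.
have hpar1 : (par <= 1)%N by case: par.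
have hdi : d = (2 * d./2 + par)%N.
  by rewrite -(eqP hpar) addnC mul2n odd_double_half.
have hi : (d./2 < l)%N by move: hdi hk hpar1; rewrite /d; lia.
set i := Ordinal hi.
have [ka hka hlead] := e_lead i; rewrite /= -hdi in hlead.
set b := a / ka.
have [c hc] : exists c : 'I_l -> C,
    I (2 * l) (y - cst b * e i - \sum_(j < l) cst (c j) * e j).
  apply: IH; first exact/sym_modB/sym_modZ/e_sym.
  apply/lead_term0; have := lead_termB ha (lead_termZ b hlead).
  by rewrite /b divfK // subrr.
exists (fun j => c j + (if j == i then b else 0)).
have -> : \sum_(j < l) cst (c j + (if j == i then b else 0)) * e j =
    \sum_(j < l) cst (c j) * e j + cst b * e i.
  rewrite (bigD1 i) //= [in RHS](bigD1 i) //= eqxx rmorphD mulrDl -!addrA.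
  congr (_ + _); rewrite addrC; congr (_ + _).
  by apply: eq_bigr => j /negPf ->; rewrite addr0.
by rewrite opprD addrA addrAC.
Qed.

End TruncationBasis.

Local Notation loop := (loop C).

Lemma loop_eq (v w : loop) :
  ce v = ce w -> cf v = cf w -> ch v = ch w -> v = w.
Proof.
by case: v => [[a b] c]; case: w => [[a' b'] c']; rewrite /ce /cf /ch /= => -> -> ->.
Qed.

Lemma ceD (v w : loop) : ce (v + w) = ce v + ce w. Proof. by []. Qed.
Lemma cfD (v w : loop) : cf (v + w) = cf v + cf w. Proof. by []. Qed.
Lemma chD (v w : loop) : ch (v + w) = ch v + ch w. Proof. by []. Qed.
Lemma ceB (v w : loop) : ce (v - w) = ce v - ce w. Proof. by []. Qed.
Lemma cfB (v w : loop) : cf (v - w) = cf v - cf w. Proof. by []. Qed.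
Lemma chB (v w : loop) : ch (v - w) = ch v - ch w. Proof. by []. Qed.
Lemma ceZ c (v : loop) : ce (lscale c v) = cst c * ce v. Proof. by []. Qed.
Lemma cfZ c (v : loop) : cf (lscale c v) = cst c * cf v. Proof. by []. Qed.
Lemma chZ c (v : loop) : ch (lscale c v) = cst c * ch v. Proof. by []. Qed.

Lemma ce_sum (J : Type) (r : seq J) (P : pred J) (G : J -> loop) :
  ce (\sum_(i <- r | P i) G i) = \sum_(i <- r | P i) ce (G i).
Proof. exact: (big_morph (@ce C)). Qed.
Lemma cf_sum (J : Type) (r : seq J) (P : pred J) (G : J -> loop) :
  cf (\sum_(i <- r | P i) G i) = \sum_(i <- r | P i) cf (G i).
Proof. exact: (big_morph (@cf C)). Qed.
Lemma ch_sum (J : Type) (r : seq J) (P : pred J) (G : J -> loop) :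
  ch (\sum_(i <- r | P i) G i) = \sum_(i <- r | P i) ch (G i).
Proof. exact: (big_morph (@ch C)). Qed.

Lemma ce_X k : ce (Xk C k) = 2%:R * u ^+ k. Proof. by []. Qed.
Lemma cf_X k : cf (Xk C k) = 2%:R * ub ^+ k. Proof. by []. Qed.
Lemma ch_X k : ch (Xk C k) = 0. Proof. by []. Qed.
Lemma ce_Y k : ce (Yk C k) = 0. Proof. by []. Qed.
Lemma cf_Y k : cf (Yk C k) = 0. Proof. by []. Qed.
Lemma ch_Y k : ch (Yk C k) = (-1) ^+ k * (u ^+ k - ub ^+ k). Proof. by []. Qed.

Lemma ce_adX0 (v : loop) : ce (adX0 v) = - (4%:R * ch v).
Proof. rewrite /adX0 /lbr /Xk /ce /cf /ch /= expr0; ring. Qed.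
Lemma cf_adX0 (v : loop) : cf (adX0 v) = 4%:R * ch v.
Proof. rewrite /adX0 /lbr /Xk /ce /cf /ch /= expr0; ring. Qed.
Lemma ch_adX0 (v : loop) : ch (adX0 v) = 2%:R * (cf v - ce v).
Proof. rewrite /adX0 /lbr /Xk /ce /cf /ch /= expr0; ring. Qed.

Lemma inOA0 : inOA (0 : loop).
Proof. by split; rewrite /ch /= ?oppr0; apply: laurent_inv0. Qed.

Lemma inOAD (v w : loop) : inOA v -> inOA w -> inOA (v + w).
Proof.
move=> [h1 h2] [h3 h4]; split; first exact: laurent_invD.
by rewrite chD opprD; apply: laurent_invD.
Qed.

Lemma inOAZ c (v : loop) : inOA v -> inOA (lscale c v).
Proof.
move=> [h1 h2]; split; first exact: laurent_invZ.
by rewrite chZ -mulrN; apply: laurent_invZ.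
Qed.

Lemma inOAN (v : loop) : inOA v -> inOA (- v).
Proof. by move=> [h1 h2]; split; apply: laurent_invN. Qed.

Lemma inOAB (v w : loop) : inOA v -> inOA w -> inOA (v - w).
Proof. by move=> hv hw; apply: inOAD hv (inOAN hw). Qed.

Lemma inOA_sum (J : Type) (r : seq J) (P : pred J) (G : J -> loop) :
  (forall i, P i -> inOA (G i)) -> inOA (\sum_(i <- r | P i) G i).
Proof.
move=> h; elim/big_rec: _ => [|i x Pi hx]; first exact: inOA0.
exact: inOAD (h i Pi) hx.
Qed.

Lemma inOA_lbr (v w : loop) : inOA v -> inOA w -> inOA (lbr v w).
Proof.
move=> [h1 h2] [h3 h4]; split.
  have h := laurent_invMn 2 (laurent_invB (laurent_invM h2 h3) (laurent_invM h1 h4)).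
  by rewrite mulNr mulrN opprK (addrC (- _)) in h.
have h := laurent_invB (laurent_invM h1 (laurent_inv_sym h3)) (laurent_invM (laurent_inv_sym h1) h3).
by rewrite -(opprB (ce v * cf w)) in h.
Qed.

Lemma inOA_X k : inOA (Xk C k).
Proof.
split; first by rewrite ce_X cf_X; apply/laurent_invMn/laurent_invX/laurent_inv_u.
by rewrite ch_X oppr0; apply: laurent_inv0.
Qed.

Lemma inOA_Y k : inOA (Yk C k).
Proof.
split; first by rewrite ce_Y cf_Y; apply: laurent_inv0.
rewrite ch_Y; have := laurent_invM (laurent_invX k (laurent_invN laurent_inv1))
  (laurent_invB (laurent_invX k laurent_inv_u) (laurent_invX k laurent_inv_ub)).
by rewrite -mulrN opprB.
Qed.

Lemma inOA_adX0 (v : loop) : inOA v -> inOA (adX0 v).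
Proof. exact: inOA_lbr (inOA_X 0). Qed.

Lemma inI0 L : inI L (0 : loop).
Proof. by split; [exact: inOA0 | split; apply: ideal0]. Qed.

Lemma eig_mod_exact L mu (v : loop) : inOA v -> adX0 v = lscale mu v -> eig_mod L mu v.
Proof. by move=> h e; split=> //; rewrite e subrr; apply: inI0. Qed.

Lemma eig_mod_components L mu (v : loop) : eig_mod L mu v ->
  [/\ I L (- (4%:R * ch v) - cst mu * ce v),
      I L (4%:R * ch v - cst mu * cf v) &
      I L (2%:R * (cf v - ce v) - cst mu * ch v)].
Proof.
move=> [hv [hD [hDe hDh]]]; have [hDef _] := hD.
rewrite ceB ce_adX0 ceZ in hDe hDef; rewrite cfB cf_adX0 cfZ in hDef.
rewrite chB ch_adX0 chZ in hDh.
by split=> //; apply: laurent_inv_ideal hDef hDe.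
Qed.

Lemma eig_mod_intro L mu (v : loop) : inOA v ->
  I L (- (4%:R * ch v) - cst mu * ce v) ->
  I L (2%:R * (cf v - ce v) - cst mu * ch v) -> eig_mod L mu v.
Proof.
move=> hv he hh; split=> //; split; first exact/inOAB/inOAZ/hv/inOA_adX0.
by rewrite ceB chB ce_adX0 ch_adX0 ceZ chZ.
Qed.

Lemma eig_mod0 L mu : eig_mod L mu (0 : loop).
Proof.
have [e0 f0 h0] : [/\ ce (0 : loop) = 0, cf (0 : loop) = 0 & ch (0 : loop) = 0] by [].
by apply: eig_mod_intro inOA0 _ _; rewrite e0 ?f0 h0 ?mulr0 ?subr0 ?oppr0 ?mulr0; apply: ideal0.
Qed.

Lemma eig_modD L mu (v w : loop) :
  eig_mod L mu v -> eig_mod L mu w -> eig_mod L mu (v + w).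
Proof.
move=> hv hw; have [hv1 _ hv3] := eig_mod_components hv.
have [hw1 _ hw3] := eig_mod_components hw.
apply: eig_mod_intro; first exact: inOAD hv.1 hw.1.
  by apply: ideal_eq (idealD hv1 hw1) _; rewrite ceD chD; ring.
by apply: ideal_eq (idealD hv3 hw3) _; rewrite ceD cfD chD; ring.
Qed.

Lemma eig_modZ L mu c (v : loop) : eig_mod L mu v -> eig_mod L mu (lscale c v).
Proof.
move=> hv; have [hv1 _ hv3] := eig_mod_components hv.
apply: eig_mod_intro; first exact: inOAZ hv.1.
  by apply: ideal_eq (idealZ c hv1) _; rewrite ceZ chZ; ring.
by apply: ideal_eq (idealZ c hv3) _; rewrite ceZ cfZ chZ; ring.
Qed.

Lemma eig_modB L mu (v w : loop) :
  eig_mod L mu v -> eig_mod L mu w -> eig_mod L mu (v - w).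
Proof.
move=> hv hw; have -> : v - w = v + lscale (-1) w.
  by apply: loop_eq; rewrite ?ceD ?cfD ?chD ?ceZ ?cfZ ?chZ rmorphN1 mulN1r.
exact/eig_modD/eig_modZ.
Qed.

Lemma eig_mod_sum L mu (J : Type) (r : seq J) (P : pred J) (G : J -> loop) :
  (forall i, P i -> eig_mod L mu (G i)) -> eig_mod L mu (\sum_(i <- r | P i) G i).
Proof.
move=> h; elim/big_rec: _ => [|i x Pi hx]; first exact: eig_mod0.
exact: eig_modD (h i Pi) hx.
Qed.

Lemma eig_mod0_components L (v : loop) :
  eig_mod L 0 v -> I L (ch v) /\ I L (cf v - ce v).
Proof.
move=> /eig_mod_components [h1 _ h3].
rewrite rmorph0 !mul0r !subr0 in h1 h3.
rewrite -mulNr -(rmorph_nat (@cst C)) -rmorphN in h1.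
rewrite -(rmorph_nat (@cst C)) in h3.
by split; [apply: (idealZ_inv _ h1) | apply: (idealZ_inv _ h3)];
  rewrite ?oppr_eq0 pnatr_eq0.
Qed.

Lemma eig_mod0_inI L (v : loop) : eig_mod L 0 v -> I L (ce v) -> inI L v.
Proof. by move=> hv he; split; [exact: hv.1 | split=> //; apply: (eig_mod0_components hv).1]. Qed.

Lemma eig_mod_inI L mu (v : loop) :
  mu != 0 -> eig_mod L mu v -> I L (ch v) -> inI L v.
Proof.
move=> hmu hv hh; split; first exact: hv.1.
split=> //; apply: (idealZ_inv hmu).
have [h1 _ _] := eig_mod_components hv.
by apply: ideal_eq (idealB (idealN h1) (idealMn 4 hh)) _; ring.
Qed.

Lemma adX0_decomposition L (w : loop) : inOA w ->
  exists w0 w4 wm4 : loop,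
    [/\ eig_mod L 0 w0, eig_mod L 4 w4, eig_mod L (-4) wm4
      & inI L (w - (w0 + w4 + wm4))].
Proof.
case: w => [[a b] c] [hab hc]; rewrite /ce /cf /ch /= in hab hc.
pose h : RF := 2%:R^-1.
have h2 : (2%:R : RF) != 0 by rewrite -(rmorph_nat (@cst C)) cst_neq0 pnatr_eq0.
have hh : LI h h by rewrite /h -(rmorph_nat (@cst C)) -fmorphV; apply: laurent_inv_cst.
set s := h * (a + b); set dd := h * (a - b).
set c4 := h * (c - dd); set cm := h * (c + dd).
have hs : LI s s.
  by have := laurent_invM hh (laurent_invD hab (laurent_inv_sym hab)); rewrite (addrC b).
have hd : LI dd (- dd).
  by rewrite /dd -mulrN opprB; apply: laurent_invM hh (laurent_invB hab (laurent_inv_sym hab)).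
have hc4 : LI c4 (- c4).
  by have := laurent_invM hh (laurent_invB hc hd); rewrite -opprD mulrN.
have hcm : LI cm (- cm).
  by have := laurent_invM hh (laurent_invD hc hd); rewrite -opprD mulrN.
exists ((s, s), 0), ((- c4, c4), c4), ((cm, - cm), cm); split.
- apply: eig_mod_exact; first by split=> //; rewrite /ch /= oppr0; apply: laurent_inv0.
  by apply: loop_eq; rewrite ?ce_adX0 ?cf_adX0 ?ch_adX0 /lscale /ce /cf /ch /= rmorph0; ring.
- apply: eig_mod_exact; first by split=> //; have := laurent_invN hc4; rewrite opprK.
  by apply: loop_eq; rewrite ?ce_adX0 ?cf_adX0 ?ch_adX0 /lscale /ce /cf /ch /= rmorph_nat; ring.
- apply: eig_mod_exact; first by split.
  by apply: loop_eq; rewrite ?ce_adX0 ?cf_adX0 ?ch_adX0 /lscale /ce /cf /ch /= rmorphN rmorph_nat; ring.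
- have -> : ((a, b), c) - (((s, s), 0) + ((- c4, c4), c4) + ((cm, - cm), cm)) = 0.
    by apply: loop_eq; rewrite /ce /cf /ch /= /s /c4 /cm /dd /h; field.
  exact: inI0.
Qed.

Lemma adX0_eigenvalues L mu (w : loop) :
  ~ inI L w -> eig_mod L mu w -> mu = 0 \/ mu = 4 \/ mu = -4.
Proof.
move=> hnw hw; have [h1 h2 h3] := eig_mod_components hw.
have [->|h0] := eqVneq mu 0; first by left.
have [->|h4] := eqVneq mu 4; first by right; left.
have [->|hm4] := eqVneq mu (-4); first by right; right.
exfalso; apply/hnw/(eig_mod_inI h0 hw).
have hk : 16%:R - mu * mu != 0.
  rewrite (_ : 16%:R - mu * mu = (4%:R - mu) * (4%:R + mu)); last by ring.
  apply: mulf_neq0; first by rewrite subr_eq0 eq_sym.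
  by rewrite addrC addr_eq0.
apply: (idealZ_inv hk).
apply: ideal_eq (idealB (idealD (idealZ mu h3) (idealMn 2 h2)) (idealMn 2 h1)) _.
by rewrite rmorphB rmorphM /= rmorph_nat; ring.
Qed.

Lemma eig_mod0_lbr L (w1 w2 : loop) :
  eig_mod L 0 w1 -> eig_mod L 0 w2 -> inI L (lbr w1 w2).
Proof.
move=> hw1 hw2; split; first exact: inOA_lbr hw1.1 hw2.1.
have [h1 d1] := eig_mod0_components hw1; have [h2 d2] := eig_mod0_components hw2.
have a1 := laurent_inv_laurent hw1.1.1; have a2 := laurent_inv_laurent hw2.1.1.
split.
  by apply/idealMn/idealB; [apply: idealMr h1 a2 | apply: idealMl a1 h2].
apply: ideal_eq (idealB (idealMl a1 d2) (idealMl a2 d1)) _.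
by rewrite /lbr /ce /cf /ch /=; ring.
Qed.

Lemma laurent_sign_nat k n : is_laurent ((-1) ^+ k * n%:R : RF).
Proof.
by rewrite -(rmorph_sign (@cst C)) -(rmorph_nat (@cst C)) -rmorphM; apply: laurent_cst.
Qed.

Lemma binom_series_ideal (w wb wi : RF) :
  is_laurent wi -> (1 + w) * wi = 1 -> wb = - (w * wi) -> I 1 w ->
  forall m n, I n.+1 (binom_series w m n - wb ^+ m.+1).
Proof.
move=> hwi h1 hwb hw; have hwn n := idealX1 n.+1 hw.
elim=> [|m IH] n.
  have -> : binom_series w 0 n - wb ^+ 1 =
      wi * ((1 + w) * binom_series w 0 n + w) - binom_series w 0 n * ((1 + w) * wi - 1).
    by rewrite hwb; ring.
  rewrite h1 subrr mulr0 subr0 binom_series_rec0; apply/(idealMl hwi)/idealN.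
  by rewrite -[_ ^+ n.+1]mulr1; apply: idealMl (laurent_sign_nat _ 1) (hwn n).
have -> : binom_series w m.+1 n - wb ^+ m.+2 =
    wi * ((1 + w) * binom_series w m.+1 n + w * binom_series w m n)
    - binom_series w m.+1 n * ((1 + w) * wi - 1) + wb * (binom_series w m n - wb ^+ m.+1).
  by rewrite [wb ^+ m.+2]exprS hwb; ring.
rewrite h1 subrr mulr0 subr0 binom_series_rec; apply: idealD.
  by apply/(idealMl hwi)/idealN/(idealMl (laurent_sign_nat _ _))/hwn.
apply: idealMl _ (IH n); rewrite hwb; apply/idealN.
exact: idealMr (ideal_leq _ hw) hwi.
Qed.

Lemma binom_series_u m n : (0 < n)%N -> I n (binom_series u m n.-1 - ub ^+ m.+1).
Proof.
case: n => // n _; apply: (binom_series_ideal laurent_tV).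
- by rewrite /u addrC subrK mulfV // tt_neq0.
- by rewrite ubE.
- by rewrite -[u]expr1; apply: ideal_uX.
Qed.

Lemma binom_series_ub m n : (0 < n)%N -> I n (binom_series ub m n.-1 - u ^+ m.+1).
Proof.
case: n => // n _; apply: (binom_series_ideal laurent_t).
- by rewrite /ub addrC subrK mulVf // tt_neq0.
- by rewrite /ub /u mulrBl mulVf ?tt_neq0 // mul1r opprB.
- by rewrite -[ub]expr1; apply: ideal_ubX.
Qed.

Lemma cst_sign_nat k n : cst ((-1) ^+ k * n%:R) = (-1) ^+ k * n%:R :> RF.
Proof. by rewrite rmorphM rmorph_sign rmorph_nat. Qed.

Lemma lead_term_sum lo n (c : nat -> C) : (lo < n)%N ->
  lead_term lo (c lo) (\sum_(lo <= k < n) cst (c k) * u ^+ k).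
Proof.
move=> h; rewrite big_ltn //.
have hrest : lead_term lo 0 (\sum_(lo.+1 <= k < n) cst (c k) * u ^+ k).
  apply/lead_term0; rewrite big_nat; apply: ideal_sum => k /andP [hk _].
  exact/idealZ/(ideal_leq hk)/ideal_uX.
by have := lead_termD (lead_termZ (c lo) (lead_term_uX lo)) hrest; rewrite mulr1 addr0.
Qed.

Lemma ce_Xsum lo n (c : nat -> C) :
  ce (\sum_(lo <= k < n) lscale (c k) (Xk C k)) =
  2%:R * \sum_(lo <= k < n) cst (c k) * u ^+ k.
Proof. by rewrite ce_sum mulr_sumr; apply: eq_bigr => k _; rewrite ceZ ce_X mulrCA. Qed.

Lemma cf_Xsum lo n (c : nat -> C) :
  cf (\sum_(lo <= k < n) lscale (c k) (Xk C k)) =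
  2%:R * \sum_(lo <= k < n) cst (c k) * ub ^+ k.
Proof. by rewrite cf_sum mulr_sumr; apply: eq_bigr => k _; rewrite cfZ cf_X mulrCA. Qed.

Lemma ch_Xsum lo n (c : nat -> C) :
  ch (\sum_(lo <= k < n) lscale (c k) (Xk C k)) = 0.
Proof. by rewrite ch_sum big1 // => k _; rewrite chZ ch_X mulr0. Qed.

Lemma coef_series (w : RF) m n : (m < n)%N ->
  \sum_(m.+1 <= k < n) cst ((-1) ^+ k * 'C(k - 1, m)%:R) * w ^+ k =
  binom_series w m n.-1.
Proof.
by move=> h; rewrite -binom_series_shift //; apply: eq_bigr => k _; rewrite cst_sign_nat.
Qed.

Lemma coef_series_even (w : RF) m n : ~~ odd m -> (m.+1 < n)%N ->
  \sum_(m.+2 <= k < n) cst ((-1) ^+ k * 'C(k - 1, m)%:R) * w ^+ k =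
  binom_series w m n.-1 + w ^+ m.+1.
Proof.
move=> hm h; rewrite -coef_series 1?ltnW // [in RHS]big_ltn //.
have -> : cst ((-1) ^+ m.+1 * 'C(m.+1 - 1, m)%:R) = -1 :> RF.
  by rewrite cst_sign_nat subSS subn0 binn mulr1 exprS -signr_odd (negPf hm) mulr1.
by rewrite mulN1r addrAC addNr add0r.
Qed.


Lemma inOA_B0 l (i : 'I_l) : inOA (B0 C l i).
Proof.
rewrite /B0; case: ifP => _; first exact: inOA_X.
by apply: inOA_sum => k _; apply/inOAZ/inOA_X.
Qed.

Lemma inOA_Bpm l s (i : 'I_l) : inOA (Bpm C l s i).
Proof.
apply: inOAD; first exact/inOAZ/inOA_Y.
apply/inOAZ/inOAB; first exact: inOA_X.
by apply: inOA_sum => k _; apply/inOAZ/inOA_X.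
Qed.

Lemma B0_succE l i (hi : (i.+1 < l)%N) :
  B0 C l (Ordinal hi) =
  \sum_((2 * i).+2 <= k < 2 * l) lscale ((-1) ^+ k * 'C(k - 1, 2 * i)%:R) (Xk C k).
Proof.
rewrite /B0 /=.
rewrite (_ : 2 * i.+2 - 2 = (2 * i).+2)%N; last by lia.
by rewrite (_ : 2 * i.+2 - 4 = 2 * i)%N; last by lia.
Qed.

Lemma B0_facts l (i : 'I_l) :
  [/\ ch (B0 C l i) = 0, I (2 * l) (cf (B0 C l i) - ce (B0 C l i))
    & exists2 a, a != 0 & lead_term (2 * i + false) a (ce (B0 C l i))].
Proof.
case: i => [[|i] hi].
  split=> //; first by rewrite cf_X ce_X !expr0 subrr; apply: ideal0.
  exists 2%:R; first by rewrite pnatr_eq0.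
  rewrite ce_X -(rmorph_nat (@cst C)) -[X in lead_term _ X]mulr1.
  exact/lead_termZ/lead_term_uX.
rewrite B0_succE ch_Xsum ce_Xsum cf_Xsum; split=> //.
  have hm : ~~ odd (2 * i) by rewrite oddM.
  have hil : ((2 * i).+1 < 2 * l)%N by lia.
  have hl : (0 < 2 * l)%N by lia.
  rewrite !coef_series_even //.
  apply: ideal_eq (idealMn 2 (idealB (binom_series_ub (2 * i) hl)
    (binom_series_u (2 * i) hl))) _.
  by ring.
exists (2%:R * ((-1) ^+ (2 * i).+2 * 'C((2 * i).+2 - 1, 2 * i)%:R)).
  rewrite subSS subn0 binSn mulf_neq0 ?pnatr_eq0 //.
  by rewrite mulf_neq0 ?signr_eq0 ?pnatr_eq0.
rewrite -(rmorph_nat (@cst C)) (_ : 2 * i.+1 + false = (2 * i).+2)%N; last by lia.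
by apply/lead_termZ/(lead_term_sum (fun k => _)); lia.
Qed.

Lemma B0_eig l (i : 'I_l) : eig_mod (2 * l) 0 (B0 C l i).
Proof.
have [hch hfe _] := B0_facts i.
apply: eig_mod_intro (inOA_B0 i) _ _; rewrite hch rmorph0 ?mul0r ?mulr0 ?oppr0 ?addr0.
  exact: ideal0.
exact: idealMn.
Qed.

Lemma BpmE l s (i : 'I_l) :
  Bpm C l s i = lscale 2%:R (Yk C (2 * i).+1) + lscale s (Xk C (2 * i).+1 -
    \sum_((2 * i).+1 <= k < 2 * l) lscale ((-1) ^+ k * 'C(k - 1, 2 * i)%:R) (Xk C k)).
Proof.
rewrite /Bpm /= (_ : 2 * i.+1 - 1 = (2 * i).+1)%N; last by lia.
by rewrite (_ : 2 * i.+1 - 2 = 2 * i)%N; last by lia.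
Qed.

Lemma Bpm_components l s (i : 'I_l) :
  [/\ ce (Bpm C l s i) =
        cst s * (2%:R * u ^+ (2 * i).+1 - 2%:R * binom_series u (2 * i) (2 * l).-1),
      cf (Bpm C l s i) =
        cst s * (2%:R * ub ^+ (2 * i).+1 - 2%:R * binom_series ub (2 * i) (2 * l).-1)
    & ch (Bpm C l s i) = - (2%:R * (u ^+ (2 * i).+1 - ub ^+ (2 * i).+1))].
Proof.
have hl : (2 * i < 2 * l)%N by have := ltn_ord i; lia.
rewrite BpmE ceD cfD chD !ceZ !cfZ !chZ ceB cfB chB ce_Xsum cf_Xsum ch_Xsum.
rewrite !coef_series // ce_Y cf_Y ch_Y ce_X cf_X ch_X rmorph_nat sign_odd_double.
by split; ring.
Qed.

Lemma Bpm_facts l s (i : 'I_l) :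
  [/\ sym_mod (2 * l) true (ch (Bpm C l s i)),
      exists2 a, a != 0 & lead_term (2 * i + true) a (ch (Bpm C l s i))
    & s * s = 1 -> eig_mod (2 * l) (4%:R * s) (Bpm C l s i)].
Proof.
have [hce hcf hch] := Bpm_components s i.
have hl : (0 < 2 * l)%N by have := ltn_ord i; lia.
split.
- exists (- ch (Bpm C l s i)); first exact: (inOA_Bpm s i).2.
  by rewrite expr1 mulN1r subrr; apply: ideal0.
- exists (-4); first by rewrite oppr_eq0 pnatr_eq0.
  have := lead_termZ (-2) (lead_termB (lead_term_uX (2 * i).+1) (lead_term_ubX (2 * i).+1)).
  rewrite sign_odd_double (_ : -2 * (1 - -1) = -4 :> C); last by ring.
  by rewrite hch addn1 rmorphN rmorph_nat mulNr.
- move=> hs; have hss : cst s * cst s = 1 :> RF by rewrite -rmorphM hs rmorph1.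
  apply: eig_mod_intro (inOA_Bpm s i) _ _; rewrite hce ?hcf hch rmorphM rmorph_nat.
    by apply: ideal_eq (idealMn 8 (binom_series_u (2 * i) hl)) _; ring: hss.
  apply: ideal_eq (idealZ s (idealMn 4 (idealB (binom_series_u (2 * i) hl)
    (binom_series_ub (2 * i) hl)))) _.
  by ring.
Qed.

Lemma B0_eigenbasis l : eigenbasis_mod (2 * l) 0 (B0 C l).
Proof.
have lead (i : 'I_l) : exists2 a, a != 0 & lead_term (2 * i + false) a (ce (B0 C l i)).
  by have [_ _ h] := B0_facts i.
have hsym (i : 'I_l) : sym_mod (2 * l) false (ce (B0 C l i)).
  have [_ hfe _] := B0_facts i; exists (cf (B0 C l i)); first exact: (inOA_B0 i).1.
  by rewrite expr0 mul1r.
split; first exact: B0_eig.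
- move=> c [_ [hce _]]; apply: (truncation_free lead).
  by rewrite ce_sum (eq_bigr _ (fun i _ => ceZ _ _)) in hce.
- move=> w hw; have [_ hfe] := eig_mod0_components hw.
  have hw_sym : sym_mod (2 * l) false (ce w).
    by exists (cf w); [exact: hw.1.1 | rewrite expr0 mul1r].
  have [c hc] := truncation_span lead hsym hw_sym.
  exists c; apply: eig_mod0_inI.
    by apply/eig_modB/eig_mod_sum => // i _; apply/eig_modZ/B0_eig.
  by rewrite ceB ce_sum (eq_bigr _ (fun i _ => ceZ _ _)).
Qed.

Lemma Bpm_eigenbasis l s : s * s = 1 -> eigenbasis_mod (2 * l) (4%:R * s) (Bpm C l s).
Proof.
move=> hs.
have hs0 : s != 0.
  by apply/eqP => h0; move: hs; rewrite h0 mul0r => /eqP; rewrite eq_sym oner_eq0.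
have hmu : 4%:R * s != 0 by rewrite mulf_neq0 ?pnatr_eq0.
have lead (i : 'I_l) : exists2 a, a != 0 & lead_term (2 * i + true) a (ch (Bpm C l s i)).
  by have [_ h _] := Bpm_facts s i.
have hsym (i : 'I_l) : sym_mod (2 * l) true (ch (Bpm C l s i)) by have [h _ _] := Bpm_facts s i.
have heig (i : 'I_l) : eig_mod (2 * l) (4%:R * s) (Bpm C l s i) by have [_ _ h] := Bpm_facts s i; apply: h.
split=> //.
- move=> c [_ [_ hch]]; apply: (truncation_free lead).
  by rewrite ch_sum (eq_bigr _ (fun i _ => chZ _ _)) in hch.
- move=> w hw.
  have hw_sym : sym_mod (2 * l) true (ch w).
    by exists (- ch w); [exact: hw.1.2 | rewrite expr1 mulN1r subrr; apply: ideal0].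
  have [c hc] := truncation_span lead hsym hw_sym.
  exists c; apply: (eig_mod_inI hmu).
    by apply/eig_modB/eig_mod_sum => // i _; apply/eig_modZ.
  by rewrite chB ch_sum (eq_bigr _ (fun i _ => chZ _ _)).
Qed.

End OnsagerQuotient.

Theorem lemma11 (C : numClosedFieldType) (l : nat) (hl : (1 <= l)%N) :
  let L := (2 * l)%N in
  [/\ (forall w : loop C, inOA w ->
        exists w0 w4 wm4 : loop C,
          [/\ eig_mod L 0 w0, eig_mod L 4 w4, eig_mod L (-4) wm4
            & inI L (w - (w0 + w4 + wm4))]),
      (forall (mu : C) (w : loop C), inOA w -> ~ inI L w ->
        eig_mod L mu w -> mu = 0 \/ mu = 4 \/ mu = -4),
      [/\ eigenbasis_mod L 0 (B0 C l),
           eigenbasis_mod L 4 (Bpm C l 1)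
         & eigenbasis_mod L (-4) (Bpm C l (-1))]
    & (forall w1 w2 : loop C, eig_mod L 0 w1 -> eig_mod L 0 w2 ->
        inI L (lbr w1 w2))].
Proof.
move=> L; split.
- exact: adX0_decomposition.
- by move=> mu w _; apply: adX0_eigenvalues.
- split; first exact: B0_eigenbasis.
  + by rewrite -[4]mulr1; apply: Bpm_eigenbasis; rewrite mulr1.
  + by rewrite -mulrN1; apply: Bpm_eigenbasis; rewrite mulrNN mulr1.
- exact: eig_mod0_lbr.
Qed.
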